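(* Let \((Q, \preccurlyeq_{Q})\) be a totally ordered set with a smallest element \(q_0\). Then there is a \(\preccurlyeq_{Q}\)-ultrametric \(d \colon Q^2 \to Q\) such that \(d(Q^2) = Q\) and \(\preccurlyeq_{Q}^{0} = \preccurlyeq_{Q}\), where \(\preccurlyeq_Q^0\) denotes the intersection of all partial orders \(\preccurlyeq\) on \(Q\) for which \(d\) is a \(\preccurlyeq\)-pseudoultrametric.
   Context: For a poset \((P,\preccurlyeq)\) with smallest element \(p_0\) and a nonempty set \(X\), \(d\colon X^2\to P\) is a \(\preccurlyeq\)-pseudoultrametric if \(d\) is symmetric, \(d(x,x)=p_0\) for all \(x\), and for every triple \(\langle x_1,x_2,x_3\rangle\) in \(X\) there is a permutation \((i_1,i_2,i_3)\) of \((1,2,3)\) with \(d(x_{i_1},x_{i_3})\preccurlyeq d(x_{i_1},x_{i_2})\) and \(d(x_{i_1},x_{i_2})=d(x_{i_2},x_{i_3})\) (in particular \((P,\preccurlyeq)\) must have a smallest element); it is a \(\preccurlyeq\)-ultrametric if moreover \(d(x,y)=p_0\) iff \(x=y\). \(d(Q^2)\) denotes the range of \(d\). *)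

Definition partial_order {X : Type} (R : X -> X -> Prop) : Prop :=
  (forall x, R x x) /\
  (forall x y, R x y -> R y x -> x = y) /\
  (forall x y z, R x y -> R y z -> R x z).

Definition total_order {X : Type} (R : X -> X -> Prop) : Prop :=
  partial_order R /\ (forall x y, R x y \/ R y x).

Definition is_smallest {P : Type} (R : P -> P -> Prop) (p0 : P) : Prop :=
  forall p, R p0 p.

Definition tri {X P : Type} (R : P -> P -> Prop) (d : X -> X -> P)
  (a b c : X) : Prop :=
  R (d a c) (d a b) /\ d a b = d b c.

Definition tri_perm {X P : Type} (R : P -> P -> Prop) (d : X -> X -> P)
  (x1 x2 x3 : X) : Prop :=
  tri R d x1 x2 x3 \/ tri R d x1 x3 x2 \/ tri R d x2 x1 x3 \/
  tri R d x2 x3 x1 \/ tri R d x3 x1 x2 \/ tri R d x3 x2 x1.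

Definition pseudoultrametric_at {X P : Type} (R : P -> P -> Prop)
  (d : X -> X -> P) (p0 : P) : Prop :=
  is_smallest R p0 /\
  (forall x y, d x y = d y x) /\
  (forall x, d x x = p0) /\
  (forall x1 x2 x3, tri_perm R d x1 x2 x3).

Definition pseudoultrametric {X P : Type} (R : P -> P -> Prop)
  (d : X -> X -> P) : Prop :=
  exists p0, pseudoultrametric_at R d p0.

Definition ultrametric {X P : Type} (R : P -> P -> Prop)
  (d : X -> X -> P) : Prop :=
  exists p0, pseudoultrametric_at R d p0 /\
    (forall x y, d x y = p0 <-> x = y).

From Stdlib Require Import Classical ClassicalEpsilon.

(* Take d(x, x) = q0 and d(x, y) = max(x, y) for x <> y.  On a chain the two
   largest sides of every triangle both equal its largest point, so d is a
   <=_Q-ultrametric, and d(q0, q) = q makes it onto.  Conversely, if d is an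
   R-pseudoultrametric and q0 < x < y, the triangle (q0, x, y) has sides x, y, y;
   the ultrametric condition can only pair the two sides equal to y, which
   forces x <=_R y. *)

Section TriPerm.
Context {X P : Type} (R : P -> P -> Prop) (d : X -> X -> P).

Lemma tri_perm_swap12 x1 x2 x3 : tri_perm R d x1 x2 x3 -> tri_perm R d x2 x1 x3.
Proof. unfold tri_perm; tauto. Qed.

Lemma tri_perm_swap23 x1 x2 x3 : tri_perm R d x1 x2 x3 -> tri_perm R d x1 x3 x2.
Proof. unfold tri_perm; tauto. Qed.

Hypothesis d_sym : forall x y, d x y = d y x.

Lemma tri_perm_base_le x y z :
  tri_perm R d x y z -> d x z = d y z -> d x y <> d x z -> R (d x y) (d x z).
Proof.
  intros Htri Hlegs Hbase; unfold tri_perm, tri in Htri.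
  rewrite (d_sym y x), (d_sym z x), (d_sym z y) in Htri.
  destruct Htri as [[Hle Heq]|[[Hle Heq]|[[Hle Heq]|[[Hle Heq]|[[Hle Heq]|[Hle Heq]]]]]];
    first [assumption | congruence | rewrite Hlegs; assumption].
Qed.

End TriPerm.

Section MaxDist.
Context {Q : Type} (leQ : Q -> Q -> Prop) (q0 : Q).
Hypothesis leQ_total_order : total_order leQ.
Hypothesis q0_smallest : is_smallest leQ q0.

Let leQ_antisym x y : leQ x y -> leQ y x -> x = y.
Proof. destruct leQ_total_order as [[_ [Hanti _]] _]; exact (Hanti x y). Qed.

Let leQ_trans x y z : leQ x y -> leQ y z -> leQ x z.
Proof. destruct leQ_total_order as [[_ [_ Htrans]] _]; exact (Htrans x y z). Qed.

Let leQ_total x y : leQ x y \/ leQ y x.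
Proof. destruct leQ_total_order as [_ Htot]; exact (Htot x y). Qed.

Definition max_dist (x y : Q) : Q :=
  if excluded_middle_informative (x = y) then q0
  else if excluded_middle_informative (leQ x y) then y else x.

Lemma max_dist_diag x : max_dist x x = q0.
Proof. unfold max_dist; destruct (excluded_middle_informative (x = x)); congruence. Qed.

Lemma max_dist_le x y : x <> y -> leQ x y -> max_dist x y = y.
Proof.
  intros Hneq Hle; unfold max_dist.
  destruct (excluded_middle_informative (x = y)); [contradiction|].
  destruct (excluded_middle_informative (leQ x y)); tauto.
Qed.

Lemma max_dist_ge x y : x <> y -> leQ y x -> max_dist x y = x.
Proof.
  intros Hneq Hge; unfold max_dist.
  destruct (excluded_middle_informative (x = y)); [contradiction|].
  destruct (excluded_middle_informative (leQ x y)) as [Hle|]; [|reflexivity].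
  exfalso; exact (Hneq (leQ_antisym x y Hle Hge)).
Qed.

Lemma max_dist_sym x y : max_dist x y = max_dist y x.
Proof.
  destruct (classic (x = y)) as [<-|Hneq]; [reflexivity|].
  destruct (leQ_total x y).
  - rewrite (max_dist_le x y), (max_dist_ge y x); auto.
  - rewrite (max_dist_ge x y), (max_dist_le y x); auto.
Qed.

Lemma max_dist_q0_l q : max_dist q0 q = q.
Proof.
  destruct (classic (q0 = q)) as [<-|Hneq].
  - apply max_dist_diag.
  - apply max_dist_le; auto.
Qed.

Lemma max_dist_eq_q0 x y : max_dist x y = q0 -> x = y.
Proof.
  intros Hd; apply NNPP; intros Hneq.
  destruct (leQ_total x y) as [Hle|Hge].
  - rewrite max_dist_le in Hd by assumption; subst y.
    exact (Hneq (leQ_antisym x q0 Hle (q0_smallest x))).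
  - rewrite max_dist_ge in Hd by assumption; subst x.
    exact (Hneq (leQ_antisym q0 y (q0_smallest y) Hge)).
Qed.

Lemma tri_perm_max_dist_sorted u v w :
  leQ u v -> leQ v w -> tri_perm leQ max_dist u v w.
Proof.
  intros Huv Hvw; unfold tri_perm, tri.
  destruct (classic (u = v)) as [<-|Huv_neq].
  { right; left; rewrite max_dist_diag; split; [apply q0_smallest | apply max_dist_sym]. }
  destruct (classic (v = w)) as [<-|Hvw_neq].
  { right; right; left; rewrite max_dist_diag; split; [apply q0_smallest | apply max_dist_sym]. }
  assert (Huw_neq : u <> w) by (intros <-; exact (Huv_neq (leQ_antisym u v Huv Hvw))).
  right; left.
  rewrite (max_dist_le u v), (max_dist_le u w), (max_dist_ge w v); eauto.
Qed.

Lemma tri_perm_max_dist x1 x2 x3 : tri_perm leQ max_dist x1 x2 x3.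
Proof.
  pose proof tri_perm_max_dist_sorted as Hsorted.
  pose proof (tri_perm_swap12 leQ max_dist) as Hswap12.
  pose proof (tri_perm_swap23 leQ max_dist) as Hswap23.
  destruct (leQ_total x1 x2), (leQ_total x2 x3), (leQ_total x1 x3); eauto 6.
Qed.

Lemma max_dist_pseudoultrametric_at : pseudoultrametric_at leQ max_dist q0.
Proof.
  split; [exact q0_smallest|].
  split; [exact max_dist_sym|].
  split; [exact max_dist_diag | exact tri_perm_max_dist].
Qed.

Lemma max_dist_ultrametric : ultrametric leQ max_dist.
Proof.
  exists q0; split; [exact max_dist_pseudoultrametric_at|].
  intros x y; split; [apply max_dist_eq_q0 | intros <-; apply max_dist_diag].
Qed.

Lemma max_dist_surjective q : exists x y, max_dist x y = q.
Proof. exists q0, q; apply max_dist_q0_l. Qed.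

Lemma le_of_max_dist_pseudoultrametric (R : Q -> Q -> Prop) x y :
  partial_order R -> pseudoultrametric R max_dist -> leQ x y -> R x y.
Proof.
  intros [R_refl _] [p0 [p0_smallest [_ [Hdiag Htri]]]] Hxy.
  assert (Hp0 : p0 = q0) by (rewrite <- (Hdiag x); apply max_dist_diag).
  subst p0.
  destruct (classic (x = y)) as [<-|Hxy_neq]; [apply R_refl|].
  destruct (classic (q0 = x)) as [<-|Hx_neq]; [apply p0_smallest|].
  pose proof (tri_perm_base_le R max_dist max_dist_sym q0 x y (Htri q0 x y)) as Hbase.
  rewrite !max_dist_q0_l, max_dist_le in Hbase by assumption.
  exact (Hbase eq_refl Hxy_neq).
Qed.

End MaxDist.

Theorem proposition4p7 (Q : Type) (leQ : Q -> Q -> Prop) (q0 : Q) :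
  total_order leQ -> is_smallest leQ q0 ->
  exists d : Q -> Q -> Q,
    ultrametric leQ d /\
    (forall q : Q, exists x y : Q, d x y = q) /\
    (forall x y : Q,
       (forall R : Q -> Q -> Prop,
          partial_order R -> pseudoultrametric R d -> R x y) <-> leQ x y).
Proof.
  intros Htotal Hq0.
  exists (max_dist leQ q0); split; [|split].
  - exact (max_dist_ultrametric leQ q0 Htotal Hq0).
  - exact (max_dist_surjective leQ q0 Hq0).
  - intros x y; split.
    + intros Hmin; apply Hmin; [apply Htotal|].
      exists q0; exact (max_dist_pseudoultrametric_at leQ q0 Htotal Hq0).
    + intros Hxy R HR HRd.
      exact (le_of_max_dist_pseudoultrametric leQ q0 Htotal Hq0 R x y HR HRd Hxy).
Qed.
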